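(* Let $p(z)$ be an admissible polynomial of degree at most $n-1$ and let $L(p(z))\subset S$ be the saturated segment ideal with respect to the lex order with Hilbert polynomial $p(z)$. Then $L(p(z))$ is a gen-segment ideal with respect to the revlex order if and only if $\deg p(z)\le1$ or $L(p(z))$ has at most two minimal generators of degree $>1$.
   Context: $S=K[x_0,\dots,x_n]$, $K$ algebraically closed of characteristic $0$, standard grading, $x_0<x_1<\dots<x_n$; $\mathbb T_t$ is the set of terms of degree $t$. Lex order: for terms of the same degree, $x^\alpha\prec x^\beta$ iff $\alpha_k<\beta_k$ where $k=\max\{i:\alpha_i\ne\beta_i\}$. Revlex order: $x^\alpha\prec x^\beta$ iff $\alpha_h>\beta_h$ where $h=\min\{i:\alpha_i\neq\beta_i\}$. Given a term order, $B\subseteq\mathbb T_t$ is a segment if $\tau\in B$, $\tau'\in\mathbb T_t$, $\tau'\succ\tau$ imply $\tau'\in B$; a monomial ideal is a segment ideal if all its degree components are segments. For every admissible polynomial $p(z)$ of degree $\le n-1$ there is a unique saturated lex segment ideal $L(p(z))$ with Hilbert polynomial $p(z)$. A nonzero saturated Borel ideal $I$ is a gen-segment ideal w.r.t. $\preceq$ if for every $s$, whenever $\tau$ is a minimal monomial generator of degree $s$ and $\tau'\in\mathbb T_s$ is not in the ideal generated by $I_{s-1}$ with $\tau'\succ\tau$, then $\tau'$ is also a minimal generator of $I$. *)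

(* Monomial ideals of S = K[x_0,...,x_n] are modelled
   combinatorially as sets of exponent vectors closed under divisibility. *)
From HB Require Import structures.
From mathcomp Require Import all_boot all_order all_algebra.
Set Implicit Arguments. Unset Strict Implicit. Unset Printing Implicit Defensive.
Import Order.TTheory GRing.Theory Num.Theory.

Definition term (n : nat) := {ffun 'I_n.+1 -> nat}.

Definition tdeg n (a : term n) : nat := \sum_i a i.

Definition tmul n (a b : term n) : term n := [ffun i => a i + b i].

Definition tdvd n (a b : term n) : Prop := forall i, a i <= b i.

Definition monset (n : nat) := term n -> bool.

Definition is_monideal n (I : monset n) : Prop :=
  forall a b : term n, tdvd a b -> I a -> I b.

Definition nonzero_ideal n (I : monset n) : Prop := exists a, I a.

(* saturation w.r.t. the irrelevant ideal (x_0,...,x_n):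
   tau in I^sat iff tau * m^k subset I for some k *)
Definition saturated n (I : monset n) : Prop :=
  forall a : term n,
    (exists k, forall b : term n, tdeg b = k -> I (tmul a b)) -> I a.

(* Borel ideal (char 0: Borel-fixed = strongly stable), with x_0<...<x_n:
   x^a in I, x_j | x^a, j < i  ==>  x^a x_i / x_j in I *)
Definition incr n (a : term n) (i : 'I_n.+1) : term n :=
  [ffun k => if k == i then (a k).+1 else a k].
Definition decr n (a : term n) (j : 'I_n.+1) : term n :=
  [ffun k => if k == j then (a k).-1 else a k].

Definition borel n (I : monset n) : Prop :=
  forall (a : term n) (i j : 'I_n.+1),
    I a -> 0 < a j -> (j < i)%N -> I (incr (decr a j) i).

(* Hilbert function of S/I in degree t: number of terms of degree t not in I *)
Definition hilbf n (I : monset n) (t : nat) : nat :=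
  #|[set a : {ffun 'I_n.+1 -> 'I_t.+1} |
      ((\sum_i (a i : nat)) == t) && ~~ I [ffun i => (a i : nat)]]|.

Definition hilbpoly n (I : monset n) (P : {poly rat}) : Prop :=
  exists t0, forall t, (t0 <= t)%N -> (P.[t%:R] = (hilbf I t)%:R)%R.

Definition lex_lt n (a b : term n) : Prop :=
  exists k : 'I_n.+1, a k < b k /\ forall i : 'I_n.+1, (k < i)%N -> a i = b i.

Definition revlex_lt n (a b : term n) : Prop :=
  exists h : 'I_n.+1, b h < a h /\ forall i : 'I_n.+1, (i < h)%N -> a i = b i.

Definition segment_ideal n (lt : term n -> term n -> Prop) (I : monset n) : Prop :=
  is_monideal I /\
  forall a b : term n, tdeg a = tdeg b -> I a -> lt a b -> I b.

Definition in_gen_prev n (I : monset n) (a : term n) : Prop :=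
  exists b : term n, I b /\ (tdeg b).+1 = tdeg a /\ tdvd b a.

Definition mingen n (I : monset n) (a : term n) : Prop :=
  I a /\ ~ in_gen_prev I a.

Definition gen_segment n (lt : term n -> term n -> Prop) (I : monset n) : Prop :=
  [/\ is_monideal I, nonzero_ideal I, saturated I, borel I &
   forall (s : nat) (tau tau' : term n),
     mingen I tau -> tdeg tau = s -> tdeg tau' = s ->
     ~ in_gen_prev I tau' -> lt tau tau' -> mingen I tau'].

Definition at_most_two_mingens_deg_gt1 n (I : monset n) : Prop :=
  ~ exists a b c : term n,
      [/\ mingen I a, mingen I b, mingen I c,
          (1 < tdeg a)%N /\ (1 < tdeg b)%N /\ (1 < tdeg c)%N &
          a <> b /\ a <> c /\ b <> c].

(* Saturation together with the lex-segment property makes L blind to x_0, and forces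
   x_j into L for every j beyond the top variable of any nonconstant element of L.
   Hence all minimal generators of degree > 1 share one top variable x_w, and x_w
   is not in L.  Everything hinges on whether each minimal generator involves only
   x_(w-1) and x_w.  If so, there is at most one pure power of x_w and at most one
   generator involving x_(w-1); moreover a term of the same degree that is
   revlex-larger than a generator with x_w-part x_w^a either involves some x_j with
   j > w or is divisible by x_w^(a+1), hence lies in L.  If some
   generator tau reaches below x_(w-1), then x_(w-1)^(deg tau) is a revlex-larger
   term outside L, and minimal divisors of x_w^(tau_w + 1) and of
   x_w^(tau_w) x_(w-1)^(deg tau - tau_w) are two further generators of degree > 1.
   When deg p <= 1, the Hilbert function, which would otherwise grow like t^2,
   forces a term in x_0, x_1, x_2 into L, so x_j is in L for j > 2 and a
   revlex-larger term outside L would be lex-larger. *)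

From mathcomp Require Import all_boot all_order all_algebra zify.
From Stdlib Require Import Classical.
Set Implicit Arguments. Unset Strict Implicit. Unset Printing Implicit Defensive.
Import Order.TTheory GRing.Theory Num.Theory.

Definition mono n (i : 'I_n.+1) (c : nat) : term n :=
  [ffun j => if j == i then c else 0].

Definition vars_le n (a : term n) (w : nat) : Prop :=
  forall i : 'I_n.+1, w < i -> a i = 0.

Definition vars_ge n (a : term n) (v : nat) : Prop :=
  forall i : 'I_n.+1, i < v -> a i = 0.

Definition top_var n (a : term n) (w : 'I_n.+1) : Prop := 0 < a w /\ vars_le a w.

Definition bot_var n (a : term n) (v : 'I_n.+1) : Prop := 0 < a v /\ vars_ge a v.

Definition mingens_segment n (lt : term n -> term n -> Prop) (I : monset n) : Prop :=
  forall (s : nat) (tau tau' : term n),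
    mingen I tau -> tdeg tau = s -> tdeg tau' = s ->
    ~ in_gen_prev I tau' -> lt tau tau' -> mingen I tau'.

Definition mingens_in_adjacent_vars n (I : monset n) : Prop :=
  forall (tau : term n) (v w : 'I_n.+1),
    mingen I tau -> bot_var tau v -> top_var tau w -> w <= v.+1.

(* Truncated: [prev_var ord0 = ord0]. *)
Definition prev_var n (w : 'I_n.+1) : 'I_n.+1 :=
  Ordinal (leq_ltn_trans (leq_pred w) (ltn_ord w)).

Section Terms.

Variable n : nat.
Implicit Types (a b : term n) (i j k : 'I_n.+1).

Lemma ord_gtn_eqF i j : j < i -> (i == j) = false.
Proof. by move=> lt_ji; rewrite -val_eqE gtn_eqF. Qed.

Lemma ord_ltn_eqF i j : i < j -> (i == j) = false.
Proof. by move=> lt_ij; rewrite -val_eqE ltn_eqF. Qed.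

Lemma monoE i c j : mono i c j = if j == i then c else 0.
Proof. by rewrite ffunE. Qed.

Lemma tmulE a b i : tmul a b i = a i + b i.
Proof. by rewrite ffunE. Qed.

Lemma decrE a j i : decr a j i = if i == j then (a i).-1 else a i.
Proof. by rewrite ffunE. Qed.

Lemma tdeg_mono i c : tdeg (mono i c) = c.
Proof.
rewrite /tdeg (bigD1 i) //= big1 => [|j /negPf ji]; by rewrite monoE ?eqxx ?addn0 ?ji.
Qed.

Lemma tdeg_tmul a b : tdeg (tmul a b) = tdeg a + tdeg b.
Proof. by rewrite /tdeg -big_split; apply: eq_bigr => i _; rewrite tmulE. Qed.

Lemma tdeg_decr a j : 0 < a j -> (tdeg (decr a j)).+1 = tdeg a.
Proof.
move=> aj; rewrite /tdeg (bigD1 j) //= [in RHS](bigD1 j) //= decrE eqxx -addSn prednK //.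
by congr (_ + _); apply: eq_bigr => i /negPf ij; rewrite decrE ij.
Qed.

Lemma tdeg_incr a i : tdeg (incr a i) = (tdeg a).+1.
Proof.
rewrite /tdeg (bigD1 i) //= [in RHS](bigD1 i) //= ffunE eqxx -addSn.
by congr (_ + _); apply: eq_bigr => k /negPf ki; rewrite ffunE ki.
Qed.

Lemma leq_coef_tdeg a i : a i <= tdeg a.
Proof. by rewrite /tdeg (bigD1 i) //= leq_addr. Qed.

Lemma leq_coef2_tdeg a i j : i != j -> a i + a j <= tdeg a.
Proof.
move=> ij; rewrite /tdeg (bigD1 i) //= leq_add2l (bigD1 j) 1?eq_sym //=.
exact: leq_addr.
Qed.

Lemma leq_coef3_tdeg a i j k : i != j -> i != k -> j != k ->
  a i + a j + a k <= tdeg a.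
Proof.
move=> ij ik jk; rewrite /tdeg (bigD1 i) //= -addnA leq_add2l (bigD1 j) 1?eq_sym //=.
by rewrite leq_add2l (bigD1 k) /= ?leq_addr // eq_sym ik eq_sym.
Qed.

Lemma tdeg_gt1 a i j : i != j -> 0 < a i -> 0 < a j -> 1 < tdeg a.
Proof. by move=> ij ai aj; apply: leq_trans (leq_add ai aj) (leq_coef2_tdeg a ij). Qed.

Lemma coef_pos_exists a : 0 < tdeg a -> exists i, 0 < a i.
Proof.
move=> deg_a; apply/existsP; apply: contraTT deg_a; rewrite negb_exists => /forallP a0.
rewrite -eqn0Ngt; apply/eqP/big1 => i _; apply/eqP; rewrite eqn0Ngt; exact: a0.
Qed.

Lemma tdvd_trans a b c : tdvd a b -> tdvd b c -> tdvd a c.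
Proof. by move=> ab bc i; apply: leq_trans (ab i) (bc i). Qed.

Lemma tdvd_tdeg0 a b : tdeg a = 0 -> tdvd a b.
Proof.
by move=> deg_a i; have -> : a i = 0 by apply/eqP; rewrite -leqn0 -deg_a leq_coef_tdeg.
Qed.

Lemma decr_dvd a j : tdvd (decr a j) a.
Proof. by move=> i; rewrite decrE; case: eqP => // _; exact: leq_pred. Qed.

Lemma mono_dvd i c a : c <= a i -> tdvd (mono i c) a.
Proof. by move=> le_ca k; rewrite monoE; case: eqP => [->|]. Qed.

Lemma single_var_mono a i : (forall k, k != i -> a k = 0) -> a = mono i (tdeg a).
Proof.
move=> a0; apply/ffunP => k; rewrite monoE; case: eqP => [->|/eqP /a0 //].
by rewrite /tdeg (bigD1 i) //= big1 ?addn0 // => j /a0.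
Qed.

Lemma tdeg1_mono a : tdeg a = 1 -> exists i, a = mono i 1.
Proof.
move=> deg_a; have [i ai] : exists i, 0 < a i by apply: coef_pos_exists; rewrite deg_a.
exists i; rewrite -deg_a; apply: single_var_mono => k ki; apply/eqP.
have := leq_coef2_tdeg a ki; rewrite deg_a => /(leq_trans (leq_add (leqnn _) ai)).
by rewrite addn1 ltnS leqn0.
Qed.

Lemma vars_le_max a (w : nat) i : vars_le a w -> 0 < a i -> i <= w.
Proof. by move=> aw ai; rewrite leqNgt; apply/negP => /aw ai0; rewrite ai0 in ai. Qed.

Lemma vars_ge_min a (v : nat) i : vars_ge a v -> 0 < a i -> v <= i.
Proof. by move=> av ai; rewrite leqNgt; apply/negP => /av ai0; rewrite ai0 in ai. Qed.

Lemma vars_le_or a (w : nat) : vars_le a w \/ exists2 i : 'I_n.+1, w < i & 0 < a i.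
Proof.
case: (boolP [exists i : 'I_n.+1, (w < i) && (0 < a i)]) => [/existsP [i /andP [wi ai]]|].
  by right; exists i.
rewrite negb_exists => /forallP a0; left => i wi; apply/eqP.
by rewrite eqn0Ngt; move: (a0 i); rewrite wi.
Qed.

Lemma vars_le_widen a (w w' : nat) : w <= w' -> vars_le a w -> vars_le a w'.
Proof. by move=> ww' aw i w'i; apply: aw; apply: leq_ltn_trans w'i. Qed.

Lemma vars_le_mono i c : vars_le (mono i c) i.
Proof. by move=> k ik; rewrite monoE ord_gtn_eqF. Qed.

Lemma vars_le_tmul a b (w : nat) : vars_le a w -> vars_le b w -> vars_le (tmul a b) w.
Proof. by move=> aw bw i wi; rewrite tmulE aw ?bw. Qed.

Lemma vars_ge_mono i c : vars_ge (mono i c) i.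
Proof. by move=> k ki; rewrite monoE ord_ltn_eqF. Qed.

Lemma vars_ge_widen a (v v' : nat) : v' <= v -> vars_ge a v -> vars_ge a v'.
Proof. by move=> v'v av i iv'; apply: av; apply: leq_trans v'v. Qed.

Lemma vars_ge_tmul a b (v : nat) : vars_ge a v -> vars_ge b v -> vars_ge (tmul a b) v.
Proof. by move=> av bv i iv; rewrite tmulE av ?bv. Qed.

Lemma vars_le_dvd a b (w : nat) : tdvd a b -> vars_le b w -> vars_le a w.
Proof. by move=> ab bw i wi; apply/eqP; rewrite -leqn0 -(bw i wi) ab. Qed.

Lemma vars_ge_dvd a b (v : nat) : tdvd a b -> vars_ge b v -> vars_ge a v.
Proof. by move=> ab bv i iv; apply/eqP; rewrite -leqn0 -(bv i iv) ab. Qed.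

Lemma top_var_exists a : 0 < tdeg a -> exists w, top_var a w.
Proof.
move=> /coef_pos_exists [i0 ai0].
case: (@arg_maxnP _ i0 (fun i => 0 < a i) val ai0) => w aw w_max.
exists w; split => // i wi; apply/eqP; rewrite eqn0Ngt; apply/negP => /w_max.
by move=> /leq_ltn_trans /(_ wi); rewrite ltnn.
Qed.

Lemma bot_var_exists a : 0 < tdeg a -> exists v, bot_var a v.
Proof.
move=> /coef_pos_exists [i0 ai0].
case: (@arg_minnP _ i0 (fun i => 0 < a i) val ai0) => v av v_min.
exists v; split => // i iv; apply/eqP; rewrite eqn0Ngt; apply/negP => /v_min.
by move=> /leq_ltn_trans /(_ iv); rewrite ltnn.
Qed.

Lemma lex_lt_vars_le a b k : a k < b k -> vars_le a k -> vars_le b k -> lex_lt a b.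
Proof. by move=> abk ak bk; exists k; split => // i ki; rewrite ak ?bk. Qed.

Lemma revlex_lt_exchange a b : tdeg a = tdeg b -> revlex_lt a b ->
  exists h i : 'I_n.+1, [/\ h < i, b h < a h & a i < b i].
Proof.
move=> deg_ab [h [ba_h ab_low]].
case: (boolP [exists i : 'I_n.+1, (h < i) && (a i < b i)]) => [/existsP [i /andP [hi abi]]|].
  by exists h, i.
rewrite negb_exists => /forallP ba_high; have : tdeg b < tdeg a.
  rewrite /tdeg (bigD1 h) //= [X in _ < X](bigD1 h) //= -addSn.
  apply: leq_add => //; apply: leq_sum => i _.
  case: (ltngtP i h) => [/ab_low -> //|hi|/val_inj -> //]; last exact: ltnW.
  by move: (ba_high i); rewrite hi /= -leqNgt.
by rewrite deg_ab ltnn.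
Qed.

End Terms.

Section MonomialIdeal.

Variables (n : nat) (I : monset n).
Hypothesis idI : is_monideal I.
Implicit Types (a b g tau : term n) (i k w : 'I_n.+1).

Lemma mingen_exists a : I a -> exists2 g, mingen I g & tdvd g a.
Proof.
move=> Ia; have [d deg_a] := ubnP (tdeg a); elim: d a Ia deg_a => // d IH a Ia deg_a.
case: (classic (in_gen_prev I a)) => [[b [Ib [deg_b ba]]]|min_a]; last by exists a.
have [|g mg gb] := IH b Ib; first by rewrite -ltnS deg_b.
by exists g => //; apply: tdvd_trans gb ba.
Qed.

Lemma mingen_minimal g tau : mingen I tau -> I g -> tdvd g tau -> g = tau.
Proof.
move=> [Itau min_tau] Ig gtau; apply: NNPP => ne_gtau.
have [i ne_i] : exists i, g i != tau i.
  apply: NNPP => eq_i; apply: ne_gtau; apply/ffunP => i; apply/eqP.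
  by apply: NNPP => ne_i; apply: eq_i; exists i; apply/negP.
have lt_i : g i < tau i by rewrite ltn_neqAle ne_i gtau.
apply: min_tau; exists (decr tau i); split; last split.
- apply: idI Ig => k; rewrite decrE; case: eqP => [->|_]; last exact: gtau.
  by rewrite -ltnS prednK // (leq_ltn_trans _ lt_i).
- by apply: tdeg_decr; apply: leq_ltn_trans lt_i.
- exact: decr_dvd.
Qed.

Lemma notin_gen_prev a : ~ I a -> ~ in_gen_prev I a.
Proof. by move=> Ia [b [Ib [_ ba]]]; apply: Ia; apply: idI ba Ib. Qed.

Lemma mingen_var_notin tau w : mingen I tau -> 1 < tdeg tau -> 0 < tau w -> ~ I (mono w 1).
Proof.
move=> mtau deg_tau tau_w Iw.
by move: deg_tau; rewrite -(mingen_minimal mtau Iw (mono_dvd tau_w)) tdeg_mono.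
Qed.

Lemma mingen_eq_off a b i : mingen I a -> mingen I b ->
  (forall k, k != i -> a k = b k) -> a = b.
Proof.
move=> ma mb ab_off; case: (leqP (a i) (b i)) => ab_i.
  apply: mingen_minimal mb (proj1 ma) _ => k.
  by case: (boolP (k == i)) => [/eqP ->|/ab_off ->].
apply: esym; apply: mingen_minimal ma (proj1 mb) _ => k.
by case: (boolP (k == i)) => [/eqP ->|/ab_off ->] //; apply: ltnW.
Qed.

Lemma mingens_segment_of_mem (lt : term n -> term n -> Prop) :
  (forall tau tau', mingen I tau -> tdeg tau = tdeg tau' -> lt tau tau' -> I tau') ->
  mingens_segment lt I.
Proof.
move=> mem s tau tau' mtau deg_tau deg_tau' ngp lt_tau; split => //.
by apply: mem mtau _ lt_tau; rewrite deg_tau deg_tau'.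
Qed.

Lemma mingen_two_vars_nonlinear g (w1 w : 'I_n.+1) : mingen I g -> 0 < tdeg g ->
  ~ I (mono w1 1) -> ~ I (mono w 1) -> vars_ge g w1 -> vars_le g w -> w <= w1.+1 ->
  1 < tdeg g.
Proof.
move=> mg deg_g w1_notin w_notin g_ge g_le ww1.
rewrite ltn_neqAle deg_g andbT; apply/eqP => /esym /tdeg1_mono [k gk].
have Ik : I (mono k 1) by rewrite -gk; case: mg.
have gk_pos : 0 < g k by rewrite gk monoE eqxx.
have w1k := vars_ge_min g_ge gk_pos; have kw := vars_le_max g_le gk_pos.
case: (boolP (k == w)) => [/eqP kw'|kw']; first by apply: w_notin; rewrite -kw'.
apply: w1_notin; suff -> : w1 = k by [].
by apply: ord_inj; have : (k : nat) != w := kw'; lia.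
Qed.

End MonomialIdeal.

Section LexSegment.

Variables (n : nat) (L : monset n).
Hypotheses (lexL : segment_ideal (@lex_lt n) L) (satL : saturated L).
Implicit Types (a b mu tau sigma : term n) (i j k u v w : 'I_n.+1).

Let idL : is_monideal L := proj1 lexL.
Let segL : forall a b, tdeg a = tdeg b -> L a -> lex_lt a b -> L b := proj2 lexL.

Lemma borel_of_lex : borel L.
Proof.
move=> a i j La aj ji; apply: segL La _; first by rewrite tdeg_incr tdeg_decr.
exists i; split; first by rewrite !ffunE eqxx (ord_gtn_eqF ji).
by move=> k ik; rewrite !ffunE (ord_gtn_eqF ik) (ord_gtn_eqF (ltn_trans ji ik)).
Qed.

(* Every term b of degree c other than x_0^c makes a b lex-larger than a x_0^c,
   so a m^c lies in L and saturation applies. *)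
Lemma lex_x0_cancel a c : L (tmul a (mono ord0 c)) -> L a.
Proof.
move=> Lac; apply: satL; exists c => b deg_b.
have [b0 | [k k0 bk]] := vars_le_or b 0.
  suff -> : b = mono ord0 c by [].
  by rewrite -deg_b; apply: single_var_mono => k k0; apply: b0; rewrite lt0n.
have [w [bw b_le]] := top_var_exists (leq_trans bk (leq_coef_tdeg b k)).
have w0 : 0 < w := leq_trans k0 (vars_le_max b_le bk).
apply: segL Lac _; first by rewrite !tdeg_tmul tdeg_mono deg_b.
exists w; split.
  by rewrite !tmulE monoE (@ord_gtn_eqF _ _ ord0 w0) addn0 -{1}[a w]addn0 ltn_add2l.
by move=> i wi; rewrite !tmulE monoE b_le // (@ord_gtn_eqF _ _ ord0 (ltn_trans w0 wi)).
Qed.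

Lemma mingen_x0 tau : mingen L tau -> tau ord0 = 0.
Proof.
move=> [Ltau min_tau]; apply/eqP; rewrite eqn0Ngt; apply/negP => tau0.
apply: min_tau; exists (decr tau ord0); split; last split.
- apply: (@lex_x0_cancel _ 1); suff -> : tmul (decr tau ord0) (mono ord0 1) = tau by [].
  apply/ffunP => i; rewrite tmulE decrE monoE; case: eqP => [->|_]; last by rewrite addn0.
  by rewrite addn1 prednK.
- exact: tdeg_decr.
- exact: decr_dvd.
Qed.

Lemma lex_var_mem mu (w : nat) j : L mu -> 0 < tdeg mu -> vars_le mu w -> w < j ->
  L (mono j 1).
Proof.
move=> Lmu deg_mu mu_le wj; apply: (@lex_x0_cancel _ (tdeg mu).-1).
apply: segL Lmu _; first by rewrite tdeg_tmul !tdeg_mono add1n prednK.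
apply: (lex_lt_vars_le (k := j)).
- by rewrite mu_le // tmulE !monoE eqxx.
- exact: vars_le_widen (ltnW wj) mu_le.
- apply: vars_le_tmul; first exact: vars_le_mono.
  by apply: (vars_le_widen (leq0n j)); apply: vars_le_mono.
Qed.

Lemma lex_top_pow_mem mu w u : L mu -> vars_le mu w -> u != w -> 0 < mu u ->
  L (mono w (mu w).+1).
Proof.
move=> Lmu mu_le uw mu_u; have wu : w != u by rewrite eq_sym.
have le_deg : (mu w).+1 <= tdeg mu.
  by apply: leq_trans (leq_coef2_tdeg mu wu); rewrite -addn1 leq_add2l.
apply: (@lex_x0_cancel _ (tdeg mu - (mu w).+1)).
apply: segL Lmu _; first by rewrite tdeg_tmul !tdeg_mono subnKC.
apply: (lex_lt_vars_le (k := w)) => //.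
- by rewrite tmulE !monoE eqxx leq_addr.
- apply: vars_le_tmul; first exact: vars_le_mono.
  by apply: (vars_le_widen (leq0n w)); apply: vars_le_mono.
Qed.

Lemma mingen_top_var_eq tau sigma w w' : mingen L tau -> mingen L sigma ->
  1 < tdeg tau -> 1 < tdeg sigma -> top_var tau w -> top_var sigma w' -> w = w'.
Proof.
move=> mtau msig deg_tau deg_sig [tau_w tau_le] [sig_w sig_le].
case: (ltngtP w w') => [ww'|w'w|/val_inj //]; exfalso.
  apply: (mingen_var_notin idL msig deg_sig sig_w).
  exact: lex_var_mem (proj1 mtau) (ltnW deg_tau) tau_le ww'.
apply: (mingen_var_notin idL mtau deg_tau tau_w).
exact: lex_var_mem (proj1 msig) (ltnW deg_sig) sig_le w'w.
Qed.

Lemma mingen_top_coef_le tau sigma v w : mingen L tau -> mingen L sigma ->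
  vars_le tau w -> v != w -> 0 < tau v -> 0 < sigma v -> sigma w <= tau w.
Proof.
move=> mtau msig tau_le vw tau_v sig_v; rewrite leqNgt; apply/negP => lt_w.
have Lw := lex_top_pow_mem (proj1 mtau) tau_le vw tau_v.
have sig_eq := mingen_minimal idL msig Lw (mono_dvd lt_w).
by move: sig_v; rewrite -sig_eq monoE (negbTE vw).
Qed.

Lemma mingen_eq_of_vars tau sigma v w : mingen L tau -> mingen L sigma ->
  bot_var tau v -> top_var tau w -> bot_var sigma v -> top_var sigma w -> w <= v.+1 ->
  tau = sigma.
Proof.
move=> mtau msig [tau_v tau_ge] [tau_w tau_le] [sig_v sig_ge] [sig_w sig_le] wv.
have zero_out x k : vars_ge x v -> vars_le x w -> k != v -> k != w -> x k = 0.
  move=> x_ge x_le kv kw; case: (ltngtP k v) => [/x_ge //|vk|/val_inj kv'].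
    case: (ltngtP k w) => [kw'|/x_le //|/val_inj kw']; last by rewrite kw' eqxx in kw.
    by move: (leq_trans kw' wv); rewrite ltnS leqNgt vk.
  by rewrite kv' eqxx in kv.
case: (boolP (v == w)) => [/eqP vw|vw].
  subst v; apply: (mingen_eq_off idL mtau msig (i := w)) => k kw.
  by rewrite (zero_out tau k) ?(zero_out sigma k).
have eq_w : tau w = sigma w.
  apply/eqP; rewrite eqn_leq (mingen_top_coef_le msig mtau sig_le vw sig_v tau_v).
  by rewrite (mingen_top_coef_le mtau msig tau_le vw tau_v sig_v).
apply: (mingen_eq_off idL mtau msig (i := v)) => k kv.
case: (boolP (k == w)) => [/eqP -> //|kw].
by rewrite (zero_out tau k) ?(zero_out sigma k).
Qed.

Lemma lex_push_up_mem tau v w1 w : L tau -> vars_le tau w -> 0 < tau v ->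
  v < w1 -> w1.+1 = w :> nat -> L (tmul (mono w (tau w)) (mono w1 (tdeg tau - tau w))).
Proof.
move=> Ltau tau_le tau_v vw1 w1S; have w1w : w1 < w by rewrite -w1S.
apply: segL Ltau _; first by rewrite tdeg_tmul !tdeg_mono subnKC // leq_coef_tdeg.
exists w1; split.
  rewrite tmulE !monoE eqxx (ord_ltn_eqF w1w) add0n ltn_subRL.
  have vw : v < w := ltn_trans vw1 w1w.
  apply: leq_trans (leq_coef3_tdeg tau (negbT (ord_gtn_eqF w1w))
    (negbT (ord_gtn_eqF vw)) (negbT (ord_gtn_eqF vw1))).
  by rewrite -[X in X < _]addn0 ltn_add2l.
move=> i w1i; rewrite tmulE !monoE (ord_gtn_eqF w1i) addn0.
case: (boolP (i == w)) => [/eqP -> //|iw].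
by rewrite tau_le //; have : (i : nat) != w := iw; lia.
Qed.

Lemma adjacent_at_most_two : mingens_in_adjacent_vars L -> at_most_two_mingens_deg_gt1 L.
Proof.
move=> adj [a [b [c [ma mb mc [da [db dc]] [ab [ac bc]]]]]].
have [w tw_a] := top_var_exists (ltnW da).
have top_w x : mingen L x -> 1 < tdeg x -> top_var x w.
  move=> mx dx; have [w' tw'] := top_var_exists (ltnW dx).
  by rewrite (mingen_top_var_eq ma mx da dx tw_a tw').
have same_bot x y vx vy : mingen L x -> mingen L y -> 1 < tdeg x -> 1 < tdeg y ->
    bot_var x vx -> bot_var y vy -> (vx == w) = (vy == w) -> x = y.
  move=> mx my dx dy bx by_ e; have tx := top_w x mx dx; have ty := top_w y my dy.
  have adj_x := adj x vx w mx bx tx; have adj_y := adj y vy w my by_ ty.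
  have vxw := vars_ge_min (proj2 bx) (proj1 tx).
  have vyw := vars_ge_min (proj2 by_) (proj1 ty).
  have exy : vx = vy.
    case: (boolP (vx == w)) e => [/eqP -> /esym /eqP -> //|nx /esym /negbT ny].
    by apply: ord_inj; have : (vx : nat) != w := nx; have : (vy : nat) != w := ny; lia.
  by subst vy; apply: mingen_eq_of_vars mx my bx tx by_ ty adj_x.
have [va bva] := bot_var_exists (ltnW da).
have [vb bvb] := bot_var_exists (ltnW db).
have [vc bvc] := bot_var_exists (ltnW dc).
have [e|e|e] : [\/ (va == w) = (vb == w), (va == w) = (vc == w) | (vb == w) = (vc == w)].
  by case: (va == w); case: (vb == w); case: (vc == w);
    by [apply: Or31|apply: Or32|apply: Or33].
- exact: ab (same_bot a b va vb ma mb da db bva bvb e).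
- exact: ac (same_bot a c va vc ma mc da dc bva bvc e).
- exact: bc (same_bot b c vb vc mb mc db dc bvb bvc e).
Qed.

Lemma revlex_segment_adjacent :
  mingens_segment (@revlex_lt n) L -> mingens_in_adjacent_vars L.
Proof.
move=> seg tau v w mtau [tau_v tau_ge] [tau_w tau_le]; rewrite leqNgt; apply/negP => vw.
pose w1 := prev_var w.
have vw1 : v < w1 by rewrite /=; lia.
have w1w : w1 < w by rewrite /=; lia.
have deg_tau := tdeg_gt1 (negbT (ord_ltn_eqF (ltn_trans vw1 w1w))) tau_v tau_w.
have notin : ~ L (mono w1 (tdeg tau)).
  move=> L1; apply: (mingen_var_notin idL mtau deg_tau tau_w).
  by apply: lex_var_mem L1 _ (vars_le_mono _) w1w; rewrite tdeg_mono ltnW.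
suff lt_tau : revlex_lt tau (mono w1 (tdeg tau)).
  have := seg _ _ _ mtau erefl (tdeg_mono _ _) (notin_gen_prev idL notin) lt_tau.
  by case=> /notin.
exists v; split; first by rewrite monoE ord_ltn_eqF.
by move=> i iv; rewrite tau_ge // monoE ord_ltn_eqF // (ltn_trans iv vw1).
Qed.

Lemma at_most_two_adjacent :
  at_most_two_mingens_deg_gt1 L -> mingens_in_adjacent_vars L.
Proof.
move=> two tau v w mtau [tau_v tau_ge] [tau_w tau_le]; rewrite leqNgt; apply/negP => vw.
pose w1 := prev_var w.
have vw1 : v < w1 by rewrite /=; lia.
have w1S : w1.+1 = w :> nat by rewrite /=; lia.
have w1w : w1 < w by rewrite -w1S.
have vw0 : v != w := negbT (ord_ltn_eqF (ltn_trans vw1 w1w)).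
have deg_tau := tdeg_gt1 vw0 tau_v tau_w.
have w_notin := mingen_var_notin idL mtau deg_tau tau_w.
have w1_notin : ~ L (mono w1 1).
  move=> L1; apply: w_notin.
  by apply: lex_var_mem L1 _ (vars_le_mono _) w1w; rewrite tdeg_mono.
have top_two g : mingen L g -> vars_ge g w1 -> vars_le g w -> 1 < tdeg g /\ g <> tau.
  move=> mg g_ge g_le; have ne : g <> tau by move=> gt; move: tau_v; rewrite -gt g_ge.
  have deg_g : 0 < tdeg g.
    rewrite lt0n; apply/eqP => deg_g; apply: ne.
    by apply: (mingen_minimal idL mtau (proj1 mg)); apply: tdvd_tdeg0.
  split=> //; apply: mingen_two_vars_nonlinear mg deg_g w1_notin w_notin g_ge g_le _.
  by rewrite w1S.
have [g1 mg1 g1_dvd] := mingen_exists (lex_top_pow_mem (proj1 mtau) tau_le vw0 tau_v).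
have [g2 mg2 g2_dvd] := mingen_exists (lex_push_up_mem (proj1 mtau) tau_le tau_v vw1 w1S).
have [deg1 ne1] : 1 < tdeg g1 /\ g1 <> tau.
  apply: top_two mg1 (vars_ge_dvd g1_dvd _) (vars_le_dvd g1_dvd _); last exact: vars_le_mono.
  by apply: (vars_ge_widen (ltnW w1w)); apply: vars_ge_mono.
have [deg2 ne2] : 1 < tdeg g2 /\ g2 <> tau.
  apply: top_two mg2 (vars_ge_dvd g2_dvd _) (vars_le_dvd g2_dvd _).
    apply: vars_ge_tmul; last exact: vars_ge_mono.
    by apply: (vars_ge_widen (ltnW w1w)); apply: vars_ge_mono.
  apply: vars_le_tmul; first exact: vars_le_mono.
  by apply: (vars_le_widen (ltnW w1w)); apply: vars_le_mono.
suff g12 : g1 <> g2 by apply: two; exists g1, g2, tau.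
move=> g12; apply: ne1; apply: (mingen_minimal idL mtau (proj1 mg1)) => k.
case: (boolP (k == w)) => [/eqP ->|kw].
  by rewrite g12; move: (g2_dvd w); rewrite tmulE !monoE eqxx (ord_gtn_eqF w1w) addn0.
by move: (g1_dvd k); rewrite monoE (negbTE kw) leqn0 => /eqP ->.
Qed.

Lemma adjacent_revlex_mem tau tau' : mingens_in_adjacent_vars L -> mingen L tau ->
  tdeg tau = tdeg tau' -> revlex_lt tau tau' -> L tau'.
Proof.
move=> adj mtau deg_eq lt_tt.
have [h [i [hi tau_h tau'_i]]] := revlex_lt_exchange deg_eq lt_tt.
have tau_h0 : 0 < tau h := leq_ltn_trans (leq0n _) tau_h.
have deg_tau : 0 < tdeg tau := leq_trans tau_h0 (leq_coef_tdeg tau h).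
have [w [tau_w tau_le]] := top_var_exists deg_tau.
have [v [tau_v tau_ge]] := bot_var_exists deg_tau.
have wv := adj tau v w mtau (conj tau_v tau_ge) (conj tau_w tau_le).
case: (ltnP w i) => [wi|iw].
  apply: idL (mono_dvd _) (lex_var_mem (proj1 mtau) deg_tau tau_le wi).
  exact: leq_ltn_trans (leq0n _) tau'_i.
have vh := vars_ge_min tau_ge tau_h0.
have iw_eq : i = w by apply: ord_inj; lia.
have vw : v != w by rewrite -iw_eq ord_ltn_eqF // (leq_ltn_trans vh hi).
apply: idL (mono_dvd _) (lex_top_pow_mem (proj1 mtau) tau_le vw tau_v).
by rewrite -iw_eq.
Qed.

Lemma vars_le2_revlex_mem mu tau tau' : L mu -> vars_le mu 2 -> mingen L tau ->
  tdeg tau = tdeg tau' -> revlex_lt tau tau' -> L tau'.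
Proof.
move=> Lmu mu_le mtau deg_eq lt_tt.
have [deg_mu|deg_mu] := posnP (tdeg mu); first exact: idL (tdvd_tdeg0 _ deg_mu) Lmu.
have L_high j : 2 < j -> L (mono j 1) := lex_var_mem Lmu deg_mu mu_le.
have [tau'_le|[j j2 /mono_dvd tau'_j]] := vars_le_or tau' 2; last exact: idL tau'_j (L_high j j2).
have [h [i [hi tau_h tau'_i]]] := revlex_lt_exchange deg_eq lt_tt.
have h0 : 0 < h.
  rewrite lt0n; apply/eqP => h0; move: tau_h.
  by rewrite (_ : h = ord0) ?(mingen_x0 mtau) //; apply: val_inj.
have i2 : i <= 2 := vars_le_max tau'_le (leq_ltn_trans (leq0n _) tau'_i).
have tau_le : vars_le tau 2.
  move=> j j2; apply/eqP; rewrite eqn0Ngt; apply/negP => tau_j.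
  have tau_eq := mingen_minimal idL mtau (L_high j j2) (mono_dvd tau_j).
  by move: tau_h; rewrite -tau_eq monoE ord_ltn_eqF //; lia.
have i2' : 2 <= i by lia.
apply: segL (proj1 mtau) (lex_lt_vars_le tau'_i _ _) => //.
- exact: vars_le_widen i2' tau_le.
- exact: vars_le_widen i2' tau'_le.
Qed.

End LexSegment.

Section HilbertGrowth.

Variables (n : nat) (L : monset n).

Lemma card_le_hilbf (T : finType) (f : T -> term n) (t : nat) : injective f ->
  (forall x, tdeg (f x) = t) -> (forall x, ~~ L (f x)) -> #|T| <= hilbf L t.
Proof.
move=> inj_f deg_f notin_f.
pose c x : {ffun 'I_n.+1 -> 'I_t.+1} := [ffun i => inord (f x i)].
have cK x : [ffun i => (c x i : nat)] = f x.
  by apply/ffunP => i; rewrite !ffunE inordK // ltnS -(deg_f x) leq_coef_tdeg.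
have inj_c : injective c.
  by move=> x y cxy; apply: inj_f; rewrite -(cK x) -(cK y) cxy.
rewrite -cardsT -(card_imset _ inj_c) /hilbf; apply/subset_leq_card/subsetP.
move=> _ /imsetP [x _ ->]; rewrite inE cK notin_f andbT; apply/eqP.
rewrite -[RHS](deg_f x) -(cK x) /tdeg; apply: eq_bigr => i _; by rewrite [RHS]ffunE.
Qed.

Lemma hilbf_ge_pow (m r t : nat) : m <= n -> (forall a, L a -> ~ vars_le a m) ->
  n.+1 * r <= t -> r ^ m <= hilbf L t.
Proof.
move=> mn notin rt.
(* x_0^(t - d) x_1^(e 0) ... x_m^(e (m-1)), with d the degree of the tail *)
pose low (e : {ffun 'I_m -> 'I_r}) : term n := [ffun i : 'I_n.+1 =>
  if 0 < i then oapp (fun j : 'I_m => nat_of_ord (e j)) 0 (insub i.-1) else 0].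
pose f e : term n := tmul (low e) (mono ord0 (t - tdeg (low e))).
have deg_low e : tdeg (low e) <= t.
  apply: leq_trans rt; rewrite /tdeg -[X in _ <= X * _](card_ord n.+1) -sum_nat_const.
  apply: leq_sum => i _; rewrite ffunE; case: (0 < i) => //=.
  by case: insubP => [j _ _|_] //=; apply: ltnW.
have deg_f e : tdeg (f e) = t by rewrite tdeg_tmul tdeg_mono subnKC.
have f_le e : vars_le (f e) m.
  apply: vars_le_tmul; last by apply: (vars_le_widen (leq0n m)); apply: vars_le_mono.
  move=> i mi; rewrite ffunE; case: (0 < i) => //=; case: insubP => [j _ ji|] //=.
  by move: (ltn_ord j); rewrite ji; lia.
have f_inj : injective f.
  move=> e1 e2 f12; apply/ffunP => j.
  have jn : j.+1 < n.+1 by rewrite ltnS (leq_trans (ltn_ord j) mn).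
  have f_j e : f e (Ordinal jn) = e j.
    rewrite tmulE monoE ffunE /= addn0.
    case: insubP => [j' _ j'j|]; last by rewrite /= ltn_ord.
    by have -> : j' = j by apply: val_inj.
  by apply: ord_inj; rewrite -!f_j f12.
have <- : #|{ffun 'I_m -> 'I_r}| = r ^ m by rewrite card_ffun !card_ord.
by apply: card_le_hilbf f_inj deg_f _ => e; apply/negP => /notin; apply.
Qed.

Local Open Scope ring_scope.

Lemma horner_le_sum_norm (R : realDomainType) (P : {poly R}) (m : nat) (x : R) :
  (size P <= m)%N -> 1 <= x -> P.[x] <= (\sum_(i < m) `|P`_i|) * x ^+ m.-1.
Proof.
move=> sizeP x1; have x0 : 0 <= x := le_trans ler01 x1.
rewrite (horner_coef_wide x sizeP) mulr_suml.
apply: le_trans (ler_norm _) _; apply: le_trans (ler_norm_sum _ _ _) _.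
apply: ler_sum => i _; rewrite normrM normrX (ger0_norm x0).
apply: ler_wpM2l; first exact: normr_ge0.
by apply: ler_weXn2l => //; rewrite -ltnS prednK // (leq_ltn_trans _ (ltn_ord i)).
Qed.

Lemma hilbpoly_vars_le (P : {poly rat}) (m : nat) : hilbpoly L P ->
  (size P <= m)%N -> (m <= n)%N -> exists2 mu, L mu & vars_le mu m.
Proof.
move=> [t0 hilbP] sizeP mn; apply: NNPP => none.
have notin a : L a -> ~ vars_le a m by move=> La am; apply: none; exists a.
pose C := \sum_(i < m) `|P`_i|.
pose K := C * n.+1%:R ^+ m.-1.
have K0 : 0 <= K by rewrite mulr_ge0 ?exprn_ge0 ?sumr_ge0 // => i _; apply: normr_ge0.
pose r := maxn (Num.Def.archi_bound K) t0.+1.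
have r_pos : (0 < r)%N by rewrite leq_max orbT.
have Kr : K < r%:R by apply: lt_le_trans (archi_boundP K0) _; rewrite ler_nat leq_maxl.
pose t := (n.+1 * r)%N.
have t0t : (t0 <= t)%N by apply: leq_trans (ltnW (leq_maxr _ _)) (leq_pmull _ _).
have t1 : 1 <= t%:R :> rat by rewrite ler1n (leq_trans r_pos) // leq_pmull.
have le_rK : (r ^ m)%:R <= K * r%:R ^+ m.-1 :> rat.
  apply: le_trans (_ : (hilbf L t)%:R <= _); first by rewrite ler_nat hilbf_ge_pow.
  rewrite -hilbP //; apply: le_trans (horner_le_sum_norm sizeP t1) _.
  by rewrite /t natrM exprMn mulrA.
case: (posnP m) => [m0|m_pos].
  by move: le_rK; rewrite /K /C m0 big_ord0 !mul0r ler10.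
move: le_rK; rewrite natrX -{1}(prednK m_pos) exprS ler_pM2r ?exprn_gt0 ?ltr0n //.
by rewrite leNgt Kr.
Qed.

End HilbertGrowth.

Theorem mainTheorem9 (n : nat) (L : monset n) (P : {poly rat}) :
  segment_ideal (@lex_lt n) L -> saturated L ->
  hilbpoly L P -> (size P <= n)%N ->
  (gen_segment (@revlex_lt n) L <->
   ((size P <= 2)%N \/ at_most_two_mingens_deg_gt1 L)).
Proof.
move=> lexL satL hilbP sizeP; split.
  case=> _ _ _ _ seg; right.
  exact: adjacent_at_most_two lexL satL (revlex_segment_adjacent lexL satL seg).
move=> cond; have [mu0 Lmu0 _] := hilbpoly_vars_le hilbP sizeP (leqnn n).
split; [exact: proj1 lexL | by exists mu0 | exact: satL | exact: borel_of_lex lexL |].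
apply: mingens_segment_of_mem => tau tau' mtau deg_eq lt_tt.
case: cond => [size2|two].
  have [|mu Lmu mu_le] := hilbpoly_vars_le hilbP (m := minn 2 n) _ (geq_minr 2 n).
    by rewrite leq_min size2 sizeP.
  have mu_le2 : vars_le mu 2 := vars_le_widen (geq_minl 2 n) mu_le.
  exact: (vars_le2_revlex_mem lexL satL Lmu mu_le2 mtau deg_eq lt_tt).
have adj := at_most_two_adjacent lexL satL two.
exact: (adjacent_revlex_mem lexL satL adj mtau deg_eq lt_tt).
Qed.
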